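(* Let $F$ be a CNF formula over variables $x_1,\dots,x_n$ with clauses $C_1,\dots,C_m$ of two or three literals each. Let $R$ be the triple set and $H=(V,A)$ the hypergraph constructed from $F$ as described in the context. If $P\subseteq A$ is an acyclic path in $H$ from $\alpha\beta$ to $c_{m+1}\gamma$, then the triple set $\mathrm{triples}(P)=\{pq|o : \{p,q\}\to\{\{p,o\},\{q,o\}\}\in P\}$ is consistent.
   Context: **Triples and trees.** A rooted triple $pq|o$, with $p,q,o$ distinct leaves and unordered in $p,q$, is displayed by a rooted binary tree $T$ (leaf set containing $p,q,o$) if the path from $p$ to $q$ is node-disjoint from the path from $o$ to the root. A triple set is consistent if some rooted binary tree displays all of its triples. **Triples and arcs.** The triple $pq|o$ corresponds to the hyperarc $\mathrm{arc}(pq|o)=\{p,q\}\to\{\{p,o\},\{q,o\}\}$, and conversely; we write $pq$ for the node $\{p,q\}$. **Hypergraph notions.** A hyperarc $u\to\{v,v'\}$ has tail $u$ and heads $\{v,v'\}$. A path from $u_0$ to $u_\ell$ is a sequence of distinct arcs $(a_1,\dots,a_\ell)$ with $\mathrm{t}(a_1)=u_0$, $u_\ell\in\mathrm{h}(a_\ell)$, and $\mathrm{t}(a_{k+1})\in\mathrm{h}(a_k)$ for all $k$. It is acyclic if no $a_k$ has a head equal to $\mathrm{t}(a_{k'})$ with $k'<k$. **Construction.** Use leaves - $x_i^j,\bar x_i^j,y_i^j,\bar y_i^j$ for $i\in[n]$, $j\in[m]$; - $b_i,b'_i$ for $i\in[n+1]$; - $c_j,d_j$ for $j\in[m]$; -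 $c_{m+1}$, and $\alpha,\beta,\gamma$. The triple set $R$ is the union of the following groups. (i) For each $i\in[n]$: - $b_ib'_i|x_i^1$ and $b'_ix_i^1|y_i^1$; - $x_i^jy_i^j|x_i^{j+1}$ and $y_i^jx_i^{j+1}|y_i^{j+1}$ for $1\le j\le m-1$; - $x_i^my_i^m|b_{i+1}$ and $y_i^mb_{i+1}|b'_{i+1}$. (ii) For each $i\in[n]$: - $b_ib'_i|\bar x_i^1$ and $b'_i\bar x_i^1|\bar y_i^1$; - $\bar x_i^j\bar y_i^j|\bar x_i^{j+1}$ and $\bar y_i^j\bar x_i^{j+1}|\bar y_i^{j+1}$ for $1\le j\le m-1$; - $\bar x_i^m\bar y_i^m|b_{i+1}$ and $\bar x_i^mb_{i+1}|b'_{i+1}$. (iii) For each clause $C_j$: - for each positive occurrence of $x_i$ in $C_j$, the triples $c_jd_j|x_i^j$, $c_jx_i^j|y_i^j$, $c_jy_i^j|c_{j+1}$; - for each negative occurrence of $x_i$ in $C_j$, the same triples with $\bar x_i^j,\bar y_i^j$ in place of $x_i^j,y_i^j$; - if $j<m$, the triple $c_jc_{j+1}|d_{j+1}$. (iv) Connecting triples: $\alpha\beta|b_1$, $\beta b_1|b'_1$, $b_{n+1}b'_{n+1}|c_1$, $b'_{n+1}c_1|d_1$, $c_mc_{m+1}|\gamma$. Then $A=\{\mathrm{arc}(t):t\in R\}$, and $V$ is the set of leaf pairs occurring in arcs of $A$. *)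

From Stdlib Require Import Arith List Lia.
Import ListNotations.

Inductive leaf : Type :=
| LX  (i j : nat)
| LXb (i j : nat)
| LY  (i j : nat)
| LYb (i j : nat)
| LB  (i : nat)
| LB' (i : nat)
| LC  (j : nat)
| LD  (j : nat)
| LAlpha | LBeta | LGamma.

Definition leaf_eq_dec (x y : leaf) : {x = y} + {x <> y}.
Proof. decide equality; apply Nat.eq_dec. Defined.

(* A literal is (i, true) for x_i and (i, false) for the negation of x_i;
   variables are numbered 1..n, clauses C_1..C_m with C_j = nth (j-1) F []. *)
Definition literal := (nat * bool)%type.
Definition clause := list literal.
Definition cnf := list clause.

Definition clause_at (F : cnf) (j : nat) : clause := nth (j - 1) F [].

Definition wf_cnf (n : nat) (F : cnf) : Prop :=
  forall C, In C F ->
    (length C = 2 \/ length C = 3) /\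
    (forall i s, In (i, s) C -> 1 <= i <= n).

(* ---------- The triple set R (one orientation of each pq|o) ---------- *)
Inductive R_base (n : nat) (F : cnf) : leaf -> leaf -> leaf -> Prop :=
| Ri1 i : 1 <= i <= n -> R_base n F (LB i) (LB' i) (LX i 1)
| Ri2 i : 1 <= i <= n -> R_base n F (LB' i) (LX i 1) (LY i 1)
| Ri3 i j : 1 <= i <= n -> 1 <= j <= length F - 1 ->
    R_base n F (LX i j) (LY i j) (LX i (j + 1))
| Ri4 i j : 1 <= i <= n -> 1 <= j <= length F - 1 ->
    R_base n F (LY i j) (LX i (j + 1)) (LY i (j + 1))
| Ri5 i : 1 <= i <= n ->
    R_base n F (LX i (length F)) (LY i (length F)) (LB (i + 1))
| Ri6 i : 1 <= i <= n ->
    R_base n F (LY i (length F)) (LB (i + 1)) (LB' (i + 1))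
| Rii1 i : 1 <= i <= n -> R_base n F (LB i) (LB' i) (LXb i 1)
| Rii2 i : 1 <= i <= n -> R_base n F (LB' i) (LXb i 1) (LYb i 1)
| Rii3 i j : 1 <= i <= n -> 1 <= j <= length F - 1 ->
    R_base n F (LXb i j) (LYb i j) (LXb i (j + 1))
| Rii4 i j : 1 <= i <= n -> 1 <= j <= length F - 1 ->
    R_base n F (LYb i j) (LXb i (j + 1)) (LYb i (j + 1))
| Rii5 i : 1 <= i <= n ->
    R_base n F (LXb i (length F)) (LYb i (length F)) (LB (i + 1))
| Rii6 i : 1 <= i <= n ->
    R_base n F (LXb i (length F)) (LB (i + 1)) (LB' (i + 1))
| Riii1 j i : 1 <= j <= length F -> In (i, true) (clause_at F j) ->
    R_base n F (LC j) (LD j) (LX i j)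
| Riii2 j i : 1 <= j <= length F -> In (i, true) (clause_at F j) ->
    R_base n F (LC j) (LX i j) (LY i j)
| Riii3 j i : 1 <= j <= length F -> In (i, true) (clause_at F j) ->
    R_base n F (LC j) (LY i j) (LC (j + 1))
| Riii4 j i : 1 <= j <= length F -> In (i, false) (clause_at F j) ->
    R_base n F (LC j) (LD j) (LXb i j)
| Riii5 j i : 1 <= j <= length F -> In (i, false) (clause_at F j) ->
    R_base n F (LC j) (LXb i j) (LYb i j)
| Riii6 j i : 1 <= j <= length F -> In (i, false) (clause_at F j) ->
    R_base n F (LC j) (LYb i j) (LC (j + 1))
| Riii7 j : 1 <= j < length F ->
    R_base n F (LC j) (LC (j + 1)) (LD (j + 1))
| Riv1 : R_base n F LAlpha LBeta (LB 1)
| Riv2 : R_base n F LBeta (LB 1) (LB' 1)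
| Riv3 : R_base n F (LB (n + 1)) (LB' (n + 1)) (LC 1)
| Riv4 : R_base n F (LB' (n + 1)) (LC 1) (LD 1)
| Riv5 : R_base n F (LC (length F)) (LC (length F + 1)) LGamma.

(* A node {p,q} is represented by a pair, compared up to swapping. *)
Definition node := (leaf * leaf)%type.
Definition node_eq (u v : node) : Prop :=
  (fst u = fst v /\ snd u = snd v) \/ (fst u = snd v /\ snd u = fst v).

Record arc := mkArc { tl : node; hd1 : node; hd2 : node }.

Definition arc_eq (a b : arc) : Prop :=
  node_eq (tl a) (tl b) /\
  ((node_eq (hd1 a) (hd1 b) /\ node_eq (hd2 a) (hd2 b)) \/
   (node_eq (hd1 a) (hd2 b) /\ node_eq (hd2 a) (hd1 b))).

Definition is_head (a : arc) (u : node) : Prop :=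
  node_eq (hd1 a) u \/ node_eq (hd2 a) u.

Definition arc_of (p q o : leaf) : arc := mkArc (p, q) (p, o) (q, o).

Definition in_A (n : nat) (F : cnf) (a : arc) : Prop :=
  exists p q o, R_base n F p q o /\ arc_eq a (arc_of p q o).

Definition dummy_arc : arc := mkArc (LAlpha, LAlpha) (LAlpha, LAlpha) (LAlpha, LAlpha).

Definition is_path (P : list arc) (u0 ul : node) : Prop :=
  P <> [] /\
  (forall k k', k < k' < length P ->
      ~ arc_eq (nth k P dummy_arc) (nth k' P dummy_arc)) /\
  node_eq (tl (nth 0 P dummy_arc)) u0 /\
  is_head (nth (length P - 1) P dummy_arc) ul /\
  (forall k, k + 1 < length P ->
      is_head (nth k P dummy_arc) (tl (nth (k + 1) P dummy_arc))).

Definition acyclic (P : list arc) : Prop :=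
  forall k k', k' < k < length P ->
    ~ is_head (nth k P dummy_arc) (tl (nth k' P dummy_arc)).

Definition triples_of (P : list arc) (p q o : leaf) : Prop :=
  p <> q /\ p <> o /\ q <> o /\
  exists a, In a P /\ arc_eq a (arc_of p q o).

Inductive tree : Type :=
| TLeaf (x : leaf)
| TNode (l r : tree).

Fixpoint leaves (T : tree) : list leaf :=
  match T with
  | TLeaf x => [x]
  | TNode l r => leaves l ++ leaves r
  end.

(* Nodes of a tree are addressed by the list of left(false)/right(true)
   moves from the root. *)
Fixpoint addr (T : tree) (x : leaf) : option (list bool) :=
  match T with
  | TLeaf y => if leaf_eq_dec x y then Some [] else None
  | TNode l r =>
      match addr l x with
      | Some a => Some (false :: a)
      | None => option_map (cons true) (addr r x)
      end
  end.

(* v is an ancestor of (or equal to) w *)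
Definition is_prefix (v w : list bool) : Prop := exists s, w = v ++ s.

Fixpoint lcp (a b : list bool) : list bool :=
  match a, b with
  | x :: a', y :: b' => if Bool.eqb x y then x :: lcp a' b' else []
  | _, _ => []
  end.

(* nodes on the path between the nodes with addresses a and b *)
Definition on_path (a b v : list bool) : Prop :=
  (is_prefix v a \/ is_prefix v b) /\ is_prefix (lcp a b) v.

Definition on_root_path (a v : list bool) : Prop := is_prefix v a.

Definition displays (T : tree) (p q o : leaf) : Prop :=
  exists ap aq ao,
    addr T p = Some ap /\ addr T q = Some aq /\ addr T o = Some ao /\
    forall v, ~ (on_path ap aq v /\ on_root_path ao v).

Definition phylo_tree (T : tree) : Prop := NoDup (leaves T).

Definition consistent (S : leaf -> leaf -> leaf -> Prop) : Prop :=
  exists T, phylo_tree T /\ forall p q o, S p q o -> displays T p q o.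

(* The tails of an acyclic path from alpha beta to c_{m+1} gamma first run through
   alpha beta, beta b_1 and, for i = 1, ..., n + 1, through b_i b'_i followed by the
   gadget of exactly one of the literals x_i, \bar x_i: this is the truth assignment
   chosen by the path.  From b_{n+1} b'_{n+1} the path enters the clause gadgets and
   never returns, since a variable gadget entered from a clause gadget can only be left
   towards some b_{i+1} b'_{i+1}, an earlier tail.  Nor can a clause gadget use the
   leaves x_i^j, y_i^j of a chosen literal: the head x_i^j y_i^j of its arc would again
   be an earlier tail.  So if the leaves are ranked in the order in which the path meets
   them, the leaves of unchosen literals being placed inside the clause gadgets, every
   triple pq|o of the path has rank p, rank q < rank o, and the caterpillar listing the
   leaves by decreasing rank displays all of them. *)

From Pilot Require Import Defs.
From Stdlib Require Import Arith List Lia Wf_nat.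
Import ListNotations.
(* Imported again after [List] so that [tl] is the tail of an arc, not [List.tl]. *)
Import Defs.

Lemma node_eq_refl u : node_eq u u.
Proof. now left. Qed.

Lemma node_eq_sym u v : node_eq u v -> node_eq v u.
Proof. unfold node_eq; intuition. Qed.

Lemma node_eq_trans u v w : node_eq u v -> node_eq v w -> node_eq u w.
Proof.
  unfold node_eq; intros [[? ?]|[? ?]] [[? ?]|[? ?]];
    [left|right|right|left]; split; congruence.
Qed.

Lemma node_eq_swap x y : node_eq (x, y) (y, x).
Proof. now right. Qed.

Lemma node_eq_dec u v : {node_eq u v} + {~ node_eq u v}.
Proof.
  destruct u as [x y], v as [x' y']; unfold node_eq; simpl.
  destruct (leaf_eq_dec x x'), (leaf_eq_dec y y'), (leaf_eq_dec x y'), (leaf_eq_dec y x');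
    tauto.
Defined.

Lemma arc_eq_dec a b : {arc_eq a b} + {~ arc_eq a b}.
Proof.
  unfold arc_eq.
  destruct (node_eq_dec (tl a) (tl b)), (node_eq_dec (hd1 a) (hd1 b)),
    (node_eq_dec (hd2 a) (hd2 b)), (node_eq_dec (hd1 a) (hd2 b)),
    (node_eq_dec (hd2 a) (hd1 b)); tauto.
Defined.

Lemma arc_eq_sym a b : arc_eq a b -> arc_eq b a.
Proof. intros [Ht [[H1 H2]|[H1 H2]]]; split; eauto using node_eq_sym. Qed.

Lemma arc_eq_trans a b c : arc_eq a b -> arc_eq b c -> arc_eq a c.
Proof.
  intros [Ht [[H1 H2]|[H1 H2]]] [Gt [[G1 G2]|[G1 G2]]];
    split; eauto using node_eq_trans.
Qed.

Lemma arc_of_node_eq p q o p' q' :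
  node_eq (p, q) (p', q') -> arc_eq (arc_of p q o) (arc_of p' q' o).
Proof.
  intros [[E1 E2]|[E1 E2]]; simpl in E1, E2; subst.
  - split; [apply node_eq_refl|]. left; split; apply node_eq_refl.
  - split; [apply node_eq_swap|]. right; split; apply node_eq_refl.
Qed.

Lemma is_head_arc_eq a b u : arc_eq a b -> is_head a u -> is_head b u.
Proof.
  intros [_ [[H1 H2]|[H1 H2]]] [G|G]; unfold is_head;
    eauto using node_eq_trans, node_eq_sym.
Qed.

Lemma arc_of_inj p q o p' q' o' :
  p <> q -> p <> o -> q <> o -> p' <> q' -> p' <> o' -> q' <> o' ->
  arc_eq (arc_of p q o) (arc_of p' q' o') -> o = o' /\ node_eq (p, q) (p', q').
Proof.
  unfold arc_eq, node_eq; simpl; intros.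
  split; [|tauto].
  repeat match goal with
  | H : _ /\ _ |- _ => destruct H
  | H : _ \/ _ |- _ => destruct H
  end; congruence.
Qed.

(** * Caterpillar trees *)

Lemma addr_of_in T x : In x (leaves T) -> exists a, addr T x = Some a.
Proof.
  induction T as [y|l IHl r IHr]; simpl; intros Hx.
  - destruct Hx as [->|[]]. destruct (leaf_eq_dec x x); [eauto|congruence].
  - destruct (addr l x) eqn:E; [eauto|].
    apply in_app_or in Hx as [Hx|Hx].
    + destruct (IHl Hx) as [a Ha]; congruence.
    + destruct (IHr Hx) as [a ->]; simpl; eauto.
Qed.

Lemma addr_of_notin T x : ~ In x (leaves T) -> addr T x = None.
Proof.
  induction T as [y|l IHl r IHr]; simpl; intros Hx.
  - destruct (leaf_eq_dec x y); [subst; tauto|auto].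
  - rewrite IHl, IHr; auto; intro; apply Hx, in_or_app; auto.
Qed.

Lemma displays_node_l l r p q o : displays l p q o -> displays (TNode l r) p q o.
Proof.
  intros (ap & aq & ao & Hp & Hq & Ho & Hdisj).
  exists (false :: ap), (false :: aq), (false :: ao); simpl.
  rewrite Hp, Hq, Ho; repeat split; auto.
  intros v [[Hpq [s Hv]] [s' Hao]]; simpl in Hv; subst v.
  apply (Hdisj (lcp ap aq ++ s)); repeat split.
  - destruct Hpq as [[t Ht]|[t Ht]]; [left|right]; exists t; simpl in Ht; congruence.
  - now exists s.
  - exists s'; simpl in Hao; congruence.
Qed.

Lemma displays_top_leaf l p q o :
  In p (leaves l) -> In q (leaves l) -> ~ In o (leaves l) ->
  displays (TNode l (TLeaf o)) p q o.
Proof.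
  intros Hp Hq Ho.
  destruct (addr_of_in _ _ Hp) as [ap Hap], (addr_of_in _ _ Hq) as [aq Haq].
  exists (false :: ap), (false :: aq), [true]; simpl.
  rewrite Hap, Haq, (addr_of_notin _ _ Ho).
  destruct (leaf_eq_dec o o) as [_|]; [|congruence].
  repeat split; auto.
  intros v [[_ [s Hv]] [s' Hao]]; simpl in Hv; subst v; discriminate.
Qed.

Lemma exists_argmax (r : leaf -> nat) L :
  L <> [] -> exists x, In x L /\ forall y, In y L -> r y <= r x.
Proof.
  induction L as [|z L IH]; intros HL; [congruence|].
  destruct L as [|w L].
  - exists z; split; [now left|]. intros y [<-|[]]; lia.
  - destruct IH as (x & Hx & Hmax); [discriminate|].
    destruct (le_lt_dec (r z) (r x)).
    + exists x; split; [now right|]. intros y [<-|Hy]; auto.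
    + exists z; split; [now left|]. intros y [<-|Hy]; [lia|]. specialize (Hmax y Hy); lia.
Qed.

Lemma caterpillar_of_rank (r : leaf -> nat) L :
  L <> [] -> NoDup L ->
  exists T, NoDup (leaves T) /\ (forall x, In x (leaves T) <-> In x L) /\
    forall p q o, In p L -> In q L -> In o L -> r p < r o -> r q < r o ->
      displays T p q o.
Proof.
  induction L as [L IH] using (well_founded_ind (well_founded_ltof _ (@length leaf))).
  intros HL Hnd.
  destruct (exists_argmax r L HL) as (x & Hx & Hmax).
  destruct (in_split _ _ Hx) as (l1 & l2 & ->).
  destruct (NoDup_remove _ _ _ Hnd) as [Hnd' Hx'].
  assert (Hin : forall y, In y (l1 ++ x :: l2) <-> y = x \/ In y (l1 ++ l2)).
  { intro y; rewrite !in_app_iff; simpl; intuition. }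
  assert (Hlow : forall y z, In y (l1 ++ x :: l2) -> r y < r z -> In z (l1 ++ x :: l2) ->
            In y (l1 ++ l2)).
  { intros y z Hy Hyz Hz. apply Hin in Hy as [->|Hy]; auto.
    specialize (Hmax z Hz); lia. }
  destruct (l1 ++ l2) as [|y l] eqn:Hrest.
  - exists (TLeaf x); simpl; repeat split.
    + repeat constructor; simpl; tauto.
    + intros [<-|[]]; apply Hin; auto.
    + intros Hy; apply Hin in Hy as [->|[]]; auto.
    + intros p q o Hp _ Ho Hpo _. destruct (Hlow p o Hp Hpo Ho).
  - destruct (IH (y :: l)) as (T & HndT & HleavesT & HdispT).
    + unfold ltof; rewrite <- Hrest, !length_app; simpl; lia.
    + discriminate.
    + exact Hnd'.
    + exists (TNode T (TLeaf x)); simpl; repeat split.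
      * apply NoDup_app; [exact HndT | repeat constructor; simpl; tauto |].
        intros z Hz [<-|[]]. apply Hx', HleavesT, Hz.
      * intros Hz. apply Hin. apply in_app_or in Hz as [Hz|[<-|[]]]; auto.
        right; apply HleavesT, Hz.
      * intros Hz. apply in_or_app. apply Hin in Hz as [->|Hz]; [right; now left|].
        left; apply HleavesT, Hz.
      * intros p q o Hp Hq Ho Hpo Hqo.
        assert (Hp' := Hlow p o Hp Hpo Ho). assert (Hq' := Hlow q o Hq Hqo Ho).
        apply Hin in Ho as [->|Ho].
        -- apply displays_top_leaf; try apply HleavesT; auto.
           rewrite HleavesT; exact Hx'.
        -- apply displays_node_l, HdispT; auto.
Qed.

Lemma consistent_of_rank (r : leaf -> nat) (S : leaf -> leaf -> leaf -> Prop) L :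
  NoDup L ->
  (forall p q o, S p q o -> In p L /\ In q L /\ In o L /\ r p < r o /\ r q < r o) ->
  consistent S.
Proof.
  intros Hnd HS. destruct L as [|x L].
  - exists (TLeaf LAlpha); split; [repeat constructor; simpl; tauto|].
    intros p q o Hpqo; destruct (HS p q o Hpqo) as [[] _].
  - destruct (caterpillar_of_rank r (x :: L)) as (T & HndT & _ & HdispT);
      [discriminate | exact Hnd |].
    exists T; split; [exact HndT|].
    intros p q o Hpqo. destruct (HS p q o Hpqo) as (? & ? & ? & ? & ?). auto.
Qed.

(** * Successor tails in the hypergraph *)

Ltac head_is_constructor t :=
  lazymatch t with
  | ?f _ _ => is_constructor f
  | ?f _ => is_constructor f
  | _ => is_constructor t
  end.

Ltac inv_leaf_eqs :=
  repeat match goal with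
  | H : @eq leaf ?a ?b |- _ =>
      head_is_constructor a; head_is_constructor b; inversion H; clear H; subst
  end.

Ltac node_eq_cases H :=
  unfold node_eq in H; simpl in H; destruct H as [[? ?]|[? ?]]; inv_leaf_eqs;
  try lia; try congruence.

Section Construction.
Variables (n : nat) (F : cnf).

Lemma R_base_distinct p q o : R_base n F p q o -> p <> q /\ p <> o /\ q <> o.
Proof. intros H; inversion H; subst; repeat split; intro E; inv_leaf_eqs; lia. Qed.

Definition X (s : bool) i j := if s then LX i j else LXb i j.
Definition Y (s : bool) i j := if s then LY i j else LYb i j.

Inductive gpos := GStart | GXY (j : nat) | GYX (j : nat) | GEnd.

(* Tails met while traversing the gadget of x_i (s = true) or of \bar x_i (s = false);
   following groups (i) and (ii), the exit node is y_i^m b_{i+1}, resp. \bar x_i^m b_{i+1}. *)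
Definition gnode (i : nat) (s : bool) (c : gpos) : node :=
  match c with
  | GStart => (LB' i, X s i 1)
  | GXY j => (X s i j, Y s i j)
  | GYX j => (Y s i j, X s i (j + 1))
  | GEnd => (if s then LY i (length F) else LXb i (length F), LB (i + 1))
  end.

Inductive gstep : gpos -> gpos -> Prop :=
| gstep_start : gstep GStart (GXY 1)
| gstep_xy j : j < length F -> gstep (GXY j) (GYX j)
| gstep_last : gstep (GXY (length F)) GEnd
| gstep_yx j : gstep (GYX j) (GXY (j + 1)).

Definition is_c (x : leaf) : bool := match x with LC _ => true | _ => false end.
Definition has_c (u : node) : bool := is_c (fst u) || is_c (snd u).

Lemma has_c_node_eq u v : node_eq u v -> has_c u = has_c v.
Proof.
  unfold has_c; intros [[-> ->]|[-> ->]]; [reflexivity|apply Bool.orb_comm].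
Qed.

Lemma has_c_gnode i s c : has_c (gnode i s c) = false.
Proof. now destruct s, c. Qed.

Lemma gnode_inj i s c i' s' c' :
  node_eq (gnode i s c) (gnode i' s' c') -> i = i' /\ s = s' /\ c = c'.
Proof. destruct s, s', c, c'; simpl; intro H; node_eq_cases H; auto. Qed.

Definition is_tail (v : node) : Prop :=
  exists p q o, R_base n F p q o /\ node_eq v (p, q).

(* [v] is a head of arc(pq|o) through which a path can continue. *)
Definition feeds (p q o : leaf) (v : node) : Prop :=
  (node_eq (p, o) v \/ node_eq (q, o) v) /\ is_tail v.

(* Enumerates the arcs of A with tail [Hu] and, for the chosen head, the arcs leaving it. *)
Ltac feeds_cases HR Hu Hv :=
  let p' := fresh "p'" in let q' := fresh "q'" in let o' := fresh "o'" in
  let HR' := fresh "HR'" in let Hv' := fresh "Hv'" in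
  let Hh := fresh "Hh" in let Hlink := fresh "Hlink" in
  destruct Hv as [Hh (p' & q' & o' & HR' & Hv')];
  inversion HR; subst; first [node_eq_cases Hu | simpl in Hu; try discriminate Hu];
  destruct Hh as [Hh|Hh];
  pose proof (node_eq_trans _ _ _ Hh Hv') as Hlink;
  inversion HR'; subst; node_eq_cases Hlink.

Ltac close_node_eq :=
  simpl; solve [ apply node_eq_sym; assumption
               | eapply node_eq_trans; [apply node_eq_sym; eassumption | apply node_eq_swap] ].

Lemma feeds_from_alpha p q o v :
  R_base n F p q o -> node_eq (p, q) (LAlpha, LBeta) -> feeds p q o v ->
  node_eq v (LBeta, LB 1).
Proof. intros HR Hu Hv. feeds_cases HR Hu Hv. Qed.

Lemma feeds_from_beta p q o v :
  R_base n F p q o -> node_eq (p, q) (LBeta, LB 1) -> feeds p q o v ->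
  node_eq v (LB 1, LB' 1).
Proof. intros HR Hu Hv. feeds_cases HR Hu Hv. Qed.

Lemma feeds_from_b i p q o v :
  R_base n F p q o -> node_eq (p, q) (LB i, LB' i) -> feeds p q o v ->
  (exists s, 1 <= i <= n /\ o = X s i 1 /\ node_eq v (gnode i s GStart)) \/
  (i = n + 1 /\ o = LC 1 /\ has_c v = true).
Proof.
  intros HR Hu Hv. feeds_cases HR Hu Hv.
  - left; exists true; repeat split; [lia | lia | close_node_eq].
  - left; exists false; repeat split; [lia | lia | close_node_eq].
  - right; repeat split. rewrite (has_c_node_eq _ _ Hv'); reflexivity.
Qed.

Lemma feeds_from_gadget i s c p q o v :
  R_base n F p q o -> node_eq (p, q) (gnode i s c) -> feeds p q o v ->
  (exists c', gstep c c' /\ node_eq v (gnode i s c')) \/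
  (c = GEnd /\ node_eq v (LB (i + 1), LB' (i + 1))).
Proof.
  intros HR Hu Hv. destruct s, c; feeds_cases HR Hu Hv;
    solve [ left; eexists; split;
              [first [apply gstep_start | apply gstep_xy; lia | apply gstep_last
                     | apply gstep_yx] | close_node_eq]
          | right; split; [reflexivity | close_node_eq] ].
Qed.

Lemma feeds_from_clause p q o v :
  R_base n F p q o -> has_c (p, q) = true -> feeds p q o v ->
  has_c v = true \/ exists i s j, 1 <= i <= n /\ node_eq v (gnode i s (GXY j)).
Proof.
  intros HR Hu Hv. feeds_cases HR Hu Hv;
    solve [ left; rewrite <- (has_c_node_eq _ _ Hh); reflexivity
          | right; lazymatch type of Hh with
                   | node_eq (LX ?i ?j, _) _ => exists i, true, j
                   | node_eq (LXb ?i ?j, _) _ => exists i, false, j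
                   end; split; [lia | close_node_eq] ].
Qed.

Lemma arc_from_c_x j i s p q o :
  R_base n F p q o -> node_eq (p, q) (LC j, X s i j) \/ node_eq (p, q) (LD j, X s i j) ->
  p = LC j /\ q = X s i j /\ o = Y s i j.
Proof. intros HR [Hu|Hu]; destruct s; inversion HR; subst; node_eq_cases Hu; auto. Qed.

Lemma arc_into_c_y j i s p q o :
  R_base n F p q o -> node_eq (p, o) (LC j, Y s i j) \/ node_eq (q, o) (LC j, Y s i j) ->
  p = LC j /\ q = X s i j /\ o = Y s i j.
Proof. intros HR [Hh|Hh]; destruct s; inversion HR; subst; node_eq_cases Hh; auto. Qed.

Lemma arc_into_end p q o :
  R_base n F p q o ->
  node_eq (p, o) (LC (length F + 1), LGamma) \/ node_eq (q, o) (LC (length F + 1), LGamma) ->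
  p = LC (length F) /\ q = LC (length F + 1) /\ o = LGamma.
Proof. intros HR [Hh|Hh]; inversion HR; subst; node_eq_cases Hh; auto. Qed.

End Construction.

(** * Acyclic paths from alpha beta to c_{m+1} gamma *)

Section Path.
Variables (n : nat) (F : cnf) (P : list arc).
Hypothesis P_in_A : forall a, In a P -> in_A n F a.
Hypothesis P_path : is_path P (LAlpha, LBeta) (LC (length F + 1), LGamma).
Hypothesis P_acyclic : acyclic P.

Definition tail k := tl (nth k P dummy_arc).

Definition triple_at k p q o :=
  R_base n F p q o /\ arc_eq (nth k P dummy_arc) (arc_of p q o).

Lemma triple_at_exists k : k < length P -> exists p q o, triple_at k p q o.
Proof.
  intros Hk. destruct (P_in_A _ (nth_In P dummy_arc Hk)) as (p & q & o & HR & Ha).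
  now exists p, q, o.
Qed.

Lemma triple_at_tail k p q o : triple_at k p q o -> node_eq (tail k) (p, q).
Proof. now intros [_ [Ht _]]. Qed.

Lemma tail_zero : node_eq (tail 0) (LAlpha, LBeta).
Proof. apply P_path. Qed.

Lemma triple_at_head k p q o v :
  triple_at k p q o -> is_head (nth k P dummy_arc) v -> node_eq (p, o) v \/ node_eq (q, o) v.
Proof. intros [_ Ha] Hv. exact (is_head_arc_eq _ _ _ Ha Hv). Qed.

Lemma triple_at_feeds k p q o :
  k + 1 < length P -> triple_at k p q o -> feeds n F p q o (tail (k + 1)).
Proof.
  intros Hk Hkt. split.
  - apply (triple_at_head k); [exact Hkt|]. apply P_path; exact Hk.
  - destruct (triple_at_exists (k + 1) Hk) as (p' & q' & o' & Hkt').
    exists p', q', o'. split; [apply Hkt' | exact (triple_at_tail _ _ _ _ Hkt')].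
Qed.

Lemma tail_step k :
  k + 1 < length P ->
  exists p q o, triple_at k p q o /\ feeds n F p q o (tail (k + 1)).
Proof.
  intros Hk. destruct (triple_at_exists k ltac:(lia)) as (p & q & o & Hkt).
  exists p, q, o. split; [exact Hkt | exact (triple_at_feeds k p q o Hk Hkt)].
Qed.

Lemma triple_at_last k p q o :
  k + 1 = length P -> triple_at k p q o ->
  p = LC (length F) /\ q = LC (length F + 1) /\ o = LGamma.
Proof.
  intros Hk Hkt. destruct P_path as (_ & _ & _ & Hend & _).
  replace (length P - 1) with k in Hend by lia.
  exact (arc_into_end _ _ _ _ _ (proj1 Hkt) (triple_at_head _ _ _ _ _ Hkt Hend)).
Qed.

Lemma tail_not_last k : k < length P -> has_c (tail k) = false -> k + 1 < length P.
Proof.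
  intros Hk Hc. destruct (Nat.eq_dec (k + 1) (length P)) as [Hlast|]; [|lia].
  destruct (triple_at_exists k Hk) as (p & q & o & Hkt).
  destruct (triple_at_last k p q o Hlast Hkt) as (-> & -> & _).
  rewrite (has_c_node_eq _ _ (triple_at_tail _ _ _ _ Hkt)) in Hc. discriminate.
Qed.

Lemma head_not_earlier_tail k' k p q o :
  k' < k < length P -> triple_at k p q o ->
  node_eq (p, o) (tail k') \/ node_eq (q, o) (tail k') -> False.
Proof.
  intros Hk [_ Ha] Hh. apply (P_acyclic k k' Hk).
  apply is_head_arc_eq with (arc_of p q o); [now apply arc_eq_sym | exact Hh].
Qed.

Lemma next_tail_fresh k' k : k' < k -> k + 1 < length P -> ~ node_eq (tail (k + 1)) (tail k').
Proof.
  intros Hk' Hk Heq. destruct (tail_step k Hk) as (p & q & o & Hkt & [Hh _]).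
  apply (head_not_earlier_tail k' k p q o ltac:(lia) Hkt).
  destruct Hh; [left|right]; eapply node_eq_trans; eauto.
Qed.

Definition b_visited k i := exists k', k' < k /\ node_eq (tail k') (LB i, LB' i).

Definition visited_below k i := forall i', 1 <= i' < i -> b_visited k i'.

(* The path assigns the truth value s to x_i. *)
Definition chosen i s := Exists (fun a => arc_eq a (arc_of (LB i) (LB' i) (X s i 1))) P.

Definition in_variable_part k :=
  node_eq (tail k) (LAlpha, LBeta) \/ node_eq (tail k) (LBeta, LB 1) \/
  (exists i, node_eq (tail k) (LB i, LB' i) /\ visited_below k i) \/
  (exists i s c, node_eq (tail k) (gnode F i s c) /\ visited_below k (i + 1) /\ chosen i s).

Lemma b_visited_mono k k' i : k <= k' -> b_visited k i -> b_visited k' i.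
Proof. intros Hk (k0 & Hk0 & Ht); exists k0; split; [lia | exact Ht]. Qed.

Lemma visited_below_mono k k' i : k <= k' -> visited_below k i -> visited_below k' i.
Proof. intros Hk Hv i' Hi'; exact (b_visited_mono k k' i' Hk (Hv i' Hi')). Qed.

Lemma visited_below_succ k i :
  visited_below k i -> node_eq (tail k) (LB i, LB' i) -> visited_below (k + 1) (i + 1).
Proof.
  intros Hv Ht i' Hi'. destruct (Nat.eq_dec i' i) as [->|].
  - exists k; split; [lia | exact Ht].
  - apply (b_visited_mono k); [lia | apply Hv; lia].
Qed.

Lemma chosen_of_triple_at k i s p q :
  k < length P -> triple_at k p q (X s i 1) -> node_eq (p, q) (LB i, LB' i) -> chosen i s.
Proof.
  intros Hk [_ Ha] Hpq. apply Exists_exists. exists (nth k P dummy_arc).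
  split; [apply nth_In; exact Hk|].
  eapply arc_eq_trans; [exact Ha | apply arc_of_node_eq; exact Hpq].
Qed.

Lemma variable_part_of_no_clause k :
  k < length P -> (forall k', k' <= k -> has_c (tail k') = false) -> in_variable_part k.
Proof.
  induction k as [|k IH]; intros Hk Hnc; [left; apply tail_zero|].
  replace (S k) with (k + 1) in * by lia.
  destruct (tail_step k Hk) as (p & q & o & Hkt & Hfeed).
  assert (Hpq := node_eq_sym _ _ (triple_at_tail _ _ _ _ Hkt)).
  destruct (IH ltac:(lia) ltac:(intros; apply Hnc; lia))
    as [Ht|[Ht|[(i & Ht & Hvis)|(i & s & c & Ht & Hvis & Hch)]]];
    pose proof (node_eq_trans _ _ _ Hpq Ht) as Hu.
  - right; left. exact (feeds_from_alpha _ _ _ _ _ _ (proj1 Hkt) Hu Hfeed).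
  - right; right; left. exists 1. split; [|intros i' Hi'; exfalso; lia].
    exact (feeds_from_beta _ _ _ _ _ _ (proj1 Hkt) Hu Hfeed).
  - destruct (feeds_from_b _ _ _ _ _ _ _ (proj1 Hkt) Hu Hfeed)
      as [(s & Hi & -> & Hv)|(_ & _ & Hc)].
    + right; right; right. exists i, s, GStart. repeat split.
      * exact Hv.
      * exact (visited_below_succ k i Hvis Ht).
      * exact (chosen_of_triple_at k i s p q ltac:(lia) Hkt Hu).
    + rewrite Hnc in Hc; [discriminate | lia].
  - destruct (feeds_from_gadget _ _ _ _ _ _ _ _ _ (proj1 Hkt) Hu Hfeed)
      as [(c' & _ & Hv)|(-> & Hv)].
    + right; right; right. exists i, s, c'. repeat split; [exact Hv | | exact Hch].
      exact (visited_below_mono k (k + 1) _ ltac:(lia) Hvis).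
    + right; right; left. exists (i + 1). split; [exact Hv|].
      exact (visited_below_mono k (k + 1) _ ltac:(lia) Hvis).
Qed.

Lemma gadget_tail_step k i s c :
  k < length P -> node_eq (tail k) (gnode F i s c) ->
  k + 1 < length P /\
  ((exists c', gstep F c c' /\ node_eq (tail (k + 1)) (gnode F i s c')) \/
   (c = GEnd /\ node_eq (tail (k + 1)) (LB (i + 1), LB' (i + 1)))).
Proof.
  intros Hk Ht.
  assert (Hk' : k + 1 < length P).
  { apply tail_not_last; [exact Hk|]. rewrite (has_c_node_eq _ _ Ht). apply has_c_gnode. }
  split; [exact Hk'|].
  destruct (tail_step k Hk') as (p & q & o & Hkt & Hfeed).
  apply (feeds_from_gadget _ _ _ _ _ _ _ _ _ (proj1 Hkt)); [|exact Hfeed].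
  exact (node_eq_trans _ _ _ (node_eq_sym _ _ (triple_at_tail _ _ _ _ Hkt)) Ht).
Qed.

Lemma gadget_not_reentered k i s c :
  k < length P -> node_eq (tail k) (gnode F i s c) -> b_visited k (i + 1) -> False.
Proof.
  remember (length P - k) as d eqn:Hd. revert k c Hd.
  induction d as [|d IH]; intros k c Hd Hk Ht Hvis; [lia|].
  destruct (gadget_tail_step k i s c Hk Ht) as [Hk' [(c' & _ & Hv)|(_ & Hv)]].
  - apply (IH (k + 1) c'); [lia | exact Hk' | exact Hv |].
    exact (b_visited_mono k (k + 1) _ ltac:(lia) Hvis).
  - destruct Hvis as (k' & Hk'k & Hb).
    apply (next_tail_fresh k' k Hk'k Hk'). exact (node_eq_trans _ _ _ Hv (node_eq_sym _ _ Hb)).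
Qed.

Lemma clause_part_entry k :
  k + 1 < length P -> in_variable_part k -> has_c (tail (k + 1)) = true ->
  visited_below (k + 1) (n + 2).
Proof.
  intros Hk Hvar Hc.
  destruct (tail_step k Hk) as (p & q & o & Hkt & Hfeed).
  assert (Hpq := node_eq_sym _ _ (triple_at_tail _ _ _ _ Hkt)).
  destruct Hvar as [Ht|[Ht|[(i & Ht & Hvis)|(i & s & c & Ht & _)]]];
    pose proof (node_eq_trans _ _ _ Hpq Ht) as Hu.
  - exfalso. rewrite (has_c_node_eq _ _ (feeds_from_alpha _ _ _ _ _ _ (proj1 Hkt) Hu Hfeed)) in Hc.
    discriminate.
  - exfalso. rewrite (has_c_node_eq _ _ (feeds_from_beta _ _ _ _ _ _ (proj1 Hkt) Hu Hfeed)) in Hc.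
    discriminate.
  - destruct (feeds_from_b _ _ _ _ _ _ _ (proj1 Hkt) Hu Hfeed)
      as [(s & _ & _ & Hv)|(-> & _)].
    + rewrite (has_c_node_eq _ _ Hv), has_c_gnode in Hc. discriminate.
    + replace (n + 2) with (n + 1 + 1) by lia. exact (visited_below_succ k _ Hvis Ht).
  - exfalso. destruct (feeds_from_gadget _ _ _ _ _ _ _ _ _ (proj1 Hkt) Hu Hfeed)
      as [(c' & _ & Hv)|(_ & Hv)];
      rewrite (has_c_node_eq _ _ Hv) in Hc; [rewrite has_c_gnode in Hc|]; discriminate.
Qed.

Lemma variable_or_clause_part k :
  k < length P ->
  (forall k', k' <= k -> has_c (tail k') = false) \/
  (has_c (tail k) = true /\ visited_below k (n + 2)).
Proof.
  induction k as [|k IH]; intros Hk.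
  - left. intros k' Hk'. replace k' with 0 by lia.
    rewrite (has_c_node_eq _ _ tail_zero). reflexivity.
  - replace (S k) with (k + 1) in * by lia.
    destruct (IH ltac:(lia)) as [Hnc|[Hck Hvis]].
    + destruct (has_c (tail (k + 1))) eqn:Hc.
      * right. split; [reflexivity|].
        exact (clause_part_entry k Hk (variable_part_of_no_clause k ltac:(lia) Hnc) Hc).
      * left. intros k' Hk'. destruct (Nat.eq_dec k' (k + 1)) as [->|]; [exact Hc|].
        apply Hnc; lia.
    + destruct (tail_step k Hk) as (p & q & o & Hkt & Hfeed).
      assert (Hu : has_c (p, q) = true).
      { now rewrite <- (has_c_node_eq _ _ (triple_at_tail _ _ _ _ Hkt)). }
      destruct (feeds_from_clause _ _ _ _ _ _ (proj1 Hkt) Hu Hfeed) as [Hc|(i & s & j & Hi & Hv)].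
      * right. split; [exact Hc|]. exact (visited_below_mono k (k + 1) _ ltac:(lia) Hvis).
      * exfalso. apply (gadget_not_reentered (k + 1) i s (GXY j) Hk Hv).
        apply (visited_below_mono k (k + 1) _ ltac:(lia) Hvis); lia.
Qed.

Lemma gadget_tail_in_variable_part k i s c :
  k < length P -> node_eq (tail k) (gnode F i s c) ->
  chosen i s /\ forall k', k' <= k -> has_c (tail k') = false.
Proof.
  intros Hk Ht. destruct (variable_or_clause_part k Hk) as [Hnc|[Hc _]].
  - split; [|exact Hnc].
    destruct (variable_part_of_no_clause k Hk Hnc)
      as [Ht'|[Ht'|[(i' & Ht' & _)|(i' & s' & c' & Ht' & _ & Hch)]]];
      pose proof (node_eq_trans _ _ _ (node_eq_sym _ _ Ht) Ht') as E.
    1-3: exfalso; destruct s, c; node_eq_cases E.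
    destruct (gnode_inj _ _ _ _ _ _ _ E) as (-> & -> & _). exact Hch.
  - rewrite (has_c_node_eq _ _ Ht), has_c_gnode in Hc. discriminate.
Qed.

Lemma chosen_enters_gadget k i s :
  k < length P -> arc_eq (nth k P dummy_arc) (arc_of (LB i) (LB' i) (X s i 1)) ->
  k + 1 < length P /\ node_eq (tail (k + 1)) (gnode F i s GStart).
Proof.
  intros Hk Ha. destruct (triple_at_exists k Hk) as (p & q & o & [HR Ha']).
  destruct (R_base_distinct _ _ _ _ _ HR) as (? & ? & ?).
  destruct (arc_of_inj p q o (LB i) (LB' i) (X s i 1)) as [-> Hu];
    try (destruct s; discriminate); auto.
  { eapply arc_eq_trans; [apply arc_eq_sym, Ha' | exact Ha]. }
  assert (Hk' : k + 1 < length P).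
  { apply tail_not_last; [exact Hk|].
    rewrite (has_c_node_eq _ _ (triple_at_tail k p q _ (conj HR Ha'))).
    now rewrite (has_c_node_eq _ _ Hu). }
  split; [exact Hk'|].
  destruct (feeds_from_b _ _ _ _ _ _ _ HR Hu (triple_at_feeds k _ _ _ Hk' (conj HR Ha')))
    as [(s' & _ & Hs & Hv)|(_ & Ho & _)]; [|destruct s; discriminate].
  replace s with s' by (destruct s, s'; easy). exact Hv.
Qed.

Lemma chosen_gadget_traversed i s j :
  chosen i s -> 1 <= j <= length F ->
  exists k, k < length P /\ node_eq (tail k) (gnode F i s (GXY j)).
Proof.
  intros Hch. apply Exists_exists in Hch as (a & Ha & Hae).
  destruct (In_nth P a dummy_arc Ha) as (k0 & Hk0 & <-).
  destruct (chosen_enters_gadget k0 i s Hk0 Hae) as [Hk1 Hstart].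
  induction j as [|j IH]; intros Hj; [lia|].
  destruct (Nat.eq_dec j 0) as [->|Hj0].
  - destruct (gadget_tail_step (k0 + 1) i s GStart Hk1 Hstart) as [Hk2 [(c' & Hc' & Hv)|(? & _)]];
      [|discriminate].
    inversion Hc'; subst. exists (k0 + 1 + 1); split; [exact Hk2 | exact Hv].
  - destruct (IH ltac:(lia)) as (k & Hk & Hxy).
    destruct (gadget_tail_step k i s (GXY j) Hk Hxy) as [Hk' [(c' & Hc' & Hv)|(? & _)]];
      [|discriminate].
    inversion Hc'; subst; [|lia].
    destruct (gadget_tail_step (k + 1) i s (GYX j) Hk' Hv) as [Hk'' [(c'' & Hc'' & Hv')|(? & _)]];
      [|discriminate].
    inversion Hc''; subst. exists (k + 1 + 1). split; [exact Hk''|].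
    replace (S j) with (j + 1) by lia. exact Hv'.
Qed.

Lemma chosen_excludes_xy_arc k j i s :
  chosen i s -> 1 <= j <= length F -> k < length P ->
  triple_at k (LC j) (X s i j) (Y s i j) -> False.
Proof.
  intros Hch Hj Hk Hkt.
  destruct (chosen_gadget_traversed i s j Hch Hj) as (k' & Hk' & Hxy).
  destruct (lt_eq_lt_dec k' k) as [[Hlt|<-]|Hgt].
  - apply (head_not_earlier_tail k' k _ _ _ ltac:(lia) Hkt).
    right. apply node_eq_sym. exact Hxy.
  - pose proof (node_eq_trans _ _ _ (node_eq_sym _ _ (triple_at_tail _ _ _ _ Hkt)) Hxy) as E.
    destruct s; node_eq_cases E.
  - destruct (gadget_tail_in_variable_part k' i s _ Hk' Hxy) as [_ Hnc].
    assert (E := has_c_node_eq _ _ (triple_at_tail _ _ _ _ Hkt)).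
    rewrite Hnc in E; [discriminate | lia].
Qed.

Lemma chosen_excludes_entry_arc k j i s :
  chosen i s -> 1 <= j <= length F -> k < length P ->
  triple_at k (LC j) (LD j) (X s i j) -> False.
Proof.
  intros Hch Hj Hk Hkt.
  assert (Hk' : k + 1 < length P).
  { destruct (Nat.eq_dec (k + 1) (length P)) as [Hlast|]; [|lia].
    destruct (triple_at_last k _ _ _ Hlast Hkt) as (_ & _ & Ho). destruct s; discriminate. }
  destruct (triple_at_feeds k _ _ _ Hk' Hkt) as [Hh _].
  destruct (triple_at_exists (k + 1) Hk') as (p & q & o & Hkt').
  assert (Hu := triple_at_tail _ _ _ _ Hkt').
  destruct (arc_from_c_x n F j i s p q o (proj1 Hkt')) as (-> & -> & ->).
  { destruct Hh; [left|right]; apply node_eq_sym; eapply node_eq_trans; eauto. }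
  exact (chosen_excludes_xy_arc (k + 1) j i s Hch Hj Hk' Hkt').
Qed.

Lemma chosen_excludes_exit_arc k j i s :
  chosen i s -> 1 <= j <= length F -> k < length P ->
  triple_at k (LC j) (Y s i j) (LC (j + 1)) -> False.
Proof.
  intros Hch Hj Hk Hkt.
  destruct k as [|k].
  - pose proof (node_eq_trans _ _ _ (node_eq_sym _ _ tail_zero) (triple_at_tail _ _ _ _ Hkt)) as E.
    destruct s; node_eq_cases E.
  - replace (S k) with (k + 1) in * by lia.
    destruct (triple_at_exists k ltac:(lia)) as (p & q & o & Hkt').
    destruct (triple_at_feeds k _ _ _ Hk Hkt') as [Hh _].
    assert (Hu := triple_at_tail _ _ _ _ Hkt).
    destruct (arc_into_c_y n F j i s p q o (proj1 Hkt')) as (-> & -> & ->).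
    { destruct Hh; [left|right]; eapply node_eq_trans; eauto. }
    exact (chosen_excludes_xy_arc k j i s Hch Hj ltac:(lia) Hkt').
Qed.

Definition chosen_dec i s : {chosen i s} + {~ chosen i s} :=
  Exists_dec _ P (fun a => arc_eq_dec a _).

(* The gadget of x_i, if chosen, occupies the block [B i, B (i + 1)) and the clause
   gadget of C_j the block [K + 4 j, K + 4 j + 4), where the leaves x_i^j, y_i^j of an
   unchosen literal come right after c_j, d_j. *)
Definition rank (x : leaf) : nat :=
  let B := 2 * length F + 4 in
  let K := B * (n + 2) in
  let lit s i j d := if chosen_dec i s then B * i + 2 * j + d else K + 4 * j + 2 + d in
  match x with
  | LAlpha => 0
  | LBeta => 1
  | LB i => B * i
  | LB' i => B * i + 1
  | LX i j => lit true i j 0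
  | LY i j => lit true i j 1
  | LXb i j => lit false i j 0
  | LYb i j => lit false i j 1
  | LC j => K + 4 * j
  | LD j => K + 4 * j + 1
  | LGamma => K + 4 * length F + 8
  end.

Lemma gadget_arc_chosen k i s c p q o :
  k < length P -> triple_at k p q o -> node_eq (p, q) (gnode F i s c) -> chosen i s.
Proof.
  intros Hk Hkt Hpq.
  apply (gadget_tail_in_variable_part k i s c Hk).
  exact (node_eq_trans _ _ _ (triple_at_tail _ _ _ _ Hkt) Hpq).
Qed.

Lemma rank_increases_at k p q o :
  k < length P -> triple_at k p q o -> rank p < rank o /\ rank q < rank o.
Proof.
  intros Hk Hkt. pose proof (proj1 Hkt) as HR.
  inversion HR; subst; simpl; repeat destruct chosen_dec; try (split; nia); exfalso.
  all: first
    [ match goal with Hn : ~ chosen ?i ?s |- _ =>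
        apply Hn;
        first [ exact (gadget_arc_chosen k i s (GXY (length F)) _ _ _ Hk Hkt (node_eq_refl _))
              | exact (gadget_arc_chosen k i s GEnd _ _ _ Hk Hkt (node_eq_refl _)) ]
      end
    | match goal with Hc : chosen ?i ?s |- _ =>
        first [ solve [eapply (chosen_excludes_entry_arc k _ i s Hc); eassumption]
              | solve [eapply (chosen_excludes_xy_arc k _ i s Hc); eassumption]
              | solve [eapply (chosen_excludes_exit_arc k _ i s Hc); eassumption] ]
      end ].
Qed.

Lemma rank_increases_on_triples p q o :
  triples_of P p q o -> rank p < rank o /\ rank q < rank o.
Proof.
  intros (Hpq & Hpo & Hqo & a & Ha & Hae).
  destruct (In_nth P a dummy_arc Ha) as (k & Hk & <-).
  destruct (triple_at_exists k Hk) as (p' & q' & o' & [HR Ha']).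
  destruct (R_base_distinct _ _ _ _ _ HR) as (? & ? & ?).
  destruct (arc_of_inj p q o p' q' o') as [<- [[E1 E2]|[E1 E2]]]; auto.
  { eapply arc_eq_trans; [apply arc_eq_sym, Hae | exact Ha']. }
  all: simpl in E1, E2; subst.
  all: destruct (rank_increases_at k p' q' o Hk (conj HR Ha')); auto.
Qed.

End Path.

Definition arc_leaves (a : arc) : list leaf :=
  [fst (tl a); snd (tl a); fst (hd1 a); snd (hd1 a)].

Lemma in_arc_leaves a p q o :
  arc_eq a (arc_of p q o) -> In p (arc_leaves a) /\ In q (arc_leaves a) /\ In o (arc_leaves a).
Proof.
  destruct a as [[x y] [z w] h2]; unfold arc_eq, node_eq; simpl.
  intros [Ht [[Hh _]|[Hh _]]];
    destruct Ht as [[-> ->]|[-> ->]], Hh as [[-> ->]|[-> ->]]; simpl; tauto.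
Qed.

Theorem lemma2 (n : nat) (F : cnf) (P : list arc) :
  wf_cnf n F ->
  1 <= length F ->
  (forall a, In a P -> in_A n F a) ->
  is_path P (LAlpha, LBeta) (LC (length F + 1), LGamma) ->
  acyclic P ->
  consistent (triples_of P).
Proof.
  intros _ _ HA Hpath Hacyc.
  apply (consistent_of_rank (rank n F P) _ (nodup leaf_eq_dec (flat_map arc_leaves P))).
  - apply NoDup_nodup.
  - intros p q o Ht.
    destruct (rank_increases_on_triples n F P HA Hpath Hacyc p q o Ht) as [Hp Hq].
    destruct Ht as (_ & _ & _ & a & Ha & Hae).
    destruct (in_arc_leaves a p q o Hae) as (? & ? & ?).
    rewrite !nodup_In, !in_flat_map. repeat split; eauto.
Qed.
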